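(* Every admissible Novikov algebra is an anti-pre-Lie algebra.
   Context: All vector spaces are finite-dimensional over a field $\mathbb F$ of characteristic $0$. For a bilinear operation $\circ$ on $A$ write $[x,y]=x\circ y-y\circ x$. An anti-pre-Lie algebra is $(A,\circ)$ such that for all $x,y,z$: (i) $x\circ(y\circ z)-y\circ(x\circ z)=[y,x]\circ z$, and (ii) $[x,y]\circ z+[y,z]\circ x+[z,x]\circ y=0$. An admissible Novikov algebra is $(A,\circ)$ satisfying (i) and $2x\circ[y,z]=(x\circ y)\circ z-(x\circ z)\circ y$ for all $x,y,z\in A$. *)

From HB Require Import structures.
From mathcomp Require Import all_boot all_order all_algebra.
Set Implicit Arguments. Unset Strict Implicit. Unset Printing Implicit Defensive.
Import GRing.Theory.
Local Open Scope ring_scope.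

Definition bilinear_op (F : fieldType) (A : vectType F) (op : A -> A -> A) : Prop :=
  (forall (a : F) (x y z : A), op (a *: x + y) z = a *: op x z + op y z) /\
  (forall (a : F) (x y z : A), op x (a *: y + z) = a *: op x y + op x z).

Definition comm_op (F : fieldType) (A : vectType F) (op : A -> A -> A) (x y : A) : A :=
  op x y - op y x.

Definition anti_pre_Lie_i (F : fieldType) (A : vectType F) (op : A -> A -> A) : Prop :=
  forall x y z : A, op x (op y z) - op y (op x z) = op (comm_op op y x) z.

Definition is_anti_pre_Lie (F : fieldType) (A : vectType F) (op : A -> A -> A) : Prop :=
  anti_pre_Lie_i op /\
  forall x y z : A,
    op (comm_op op x y) z + op (comm_op op y z) x + op (comm_op op z x) y = 0.

Definition is_admissible_Novikov (F : fieldType) (A : vectType F) (op : A -> A -> A) : Prop :=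
  anti_pre_Lie_i op /\
  forall x y z : A, 2%:R *: op x (comm_op op y z) = op (op x y) z - op (op x z) y.

(* With T = x o [y,z] + y o [z,x] + z o [x,y] and S = [x,y] o z + [y,z] o x + [z,x] o y,
   summing the second admissible Novikov identity cyclically gives 2 T = S, while
   summing identity (i) cyclically gives T = -S.  Hence 3 S = 0, so S = 0 in
   characteristic 0, which is identity (ii). *)
From HB Require Import structures.
From mathcomp Require Import all_boot all_order all_algebra.
Set Implicit Arguments. Unset Strict Implicit. Unset Printing Implicit Defensive.
Local Open Scope ring_scope.
Import GRing.Theory.

Lemma addrB3_rotate_subtrahends (V : zmodType) (a b c d e f : V) :
  (a - b) + (c - d) + (e - f) = (a - d) + (c - f) + (e - b).
Proof.
have addrBACA (p q r s : V) : (p - q) + (r - s) = (p + r) - (q + s).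
  by rewrite addrACA opprD.
by rewrite !addrBACA [d + f + b]addrC addrA.
Qed.

Section CyclicCommutatorSums.

Variables (F : fieldType) (A : vectType F) (op : A -> A -> A).
Hypothesis op_bilinear : bilinear_op op.

Lemma op_subl (u v w : A) : op (u - v) w = op u w - op v w.
Proof.
have := op_bilinear.1 (-1) v u w.
by rewrite !scaleN1r !(addrC (- _)).
Qed.

Lemma op_subr (u v w : A) : op w (u - v) = op w u - op w v.
Proof.
have := op_bilinear.2 (-1) w v u.
by rewrite !scaleN1r !(addrC (- _)).
Qed.

Lemma op_oppl (u w : A) : op (- u) w = - op u w.
Proof.
have op0l : op 0 w = 0 by have := op_subl 0 0 w; rewrite !subrr.
by rewrite -sub0r op_subl op0l sub0r.
Qed.

Lemma comm_opN (u v : A) : comm_op op v u = - comm_op op u v.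
Proof. by rewrite /comm_op opprB. Qed.

Definition cyclic_comm_l (x y z : A) : A :=
  op (comm_op op x y) z + op (comm_op op y z) x + op (comm_op op z x) y.

Definition cyclic_comm_r (x y z : A) : A :=
  op x (comm_op op y z) + op y (comm_op op z x) + op z (comm_op op x y).

Lemma cyclic_comm_r_anti_pre_Lie_i (x y z : A) :
  anti_pre_Lie_i op -> cyclic_comm_r x y z = - cyclic_comm_l x y z.
Proof.
move=> op_i.
rewrite /cyclic_comm_r /comm_op !op_subr addrB3_rotate_subtrahends.
rewrite op_i op_i op_i (comm_opN x y) (comm_opN y z) (comm_opN z x).
by rewrite !op_oppl /cyclic_comm_l !opprD.
Qed.

Lemma scale2_cyclic_comm_r_Novikov (x y z : A) :
  (forall x y z : A, 2%:R *: op x (comm_op op y z) = op (op x y) z - op (op x z) y) ->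
  2%:R *: cyclic_comm_r x y z = cyclic_comm_l x y z.
Proof.
move=> op_nov.
rewrite /cyclic_comm_r !scalerDr !op_nov addrB3_rotate_subtrahends.
by rewrite /cyclic_comm_l /comm_op !op_subl.
Qed.

End CyclicCommutatorSums.

Theorem proposition3p3 (F : fieldType) (A : vectType F) (op : A -> A -> A) :
  [pchar F] =i pred0 ->
  bilinear_op op ->
  is_admissible_Novikov op ->
  is_anti_pre_Lie op.
Proof.
move=> F0 op_bil [op_i op_nov]; split=> // x y z.
have := scale2_cyclic_comm_r_Novikov op_bil x y z op_nov.
rewrite (cyclic_comm_r_anti_pre_Lie_i op_bil x y z op_i) scalerN => /eqP.
rewrite eq_sym -subr_eq0 opprK scaler_nat -mulrS -scaler_nat scaler_eq0.
by rewrite ((pcharf0P F).1 F0) => /eqP.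
Qed.
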